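(* Let $H\in\mathcal{H}_2$, let $n\ge 1$ and $\boldsymbol\mu=(\mu_1,\dots,\mu_n)\in\mathbb{C}_+^n$, and let $P(\boldsymbol\mu)$ be the orthogonal projector of $\mathcal{H}_2$ onto $\mathcal{V}(\boldsymbol\mu)=\operatorname{span}\{v[\mu_j]\}_{j=1}^n$. Suppose $\mathcal{S}\subset\mathcal{H}_2$ admits a parameterization $H_r(\cdot;\boldsymbol\theta)$ such that $\mathcal{S}=\{H_r(\cdot;\boldsymbol\theta):\boldsymbol\theta\in\mathcal{D}\}$ with $\mathcal{D}\subset\mathbb{R}^p$ open. Let $$\mathcal{T}(\boldsymbol\theta)=\operatorname{span}\Big\{\tfrac{\partial H_r(\cdot,\boldsymbol\theta)}{\partial\theta_1},\dots,\tfrac{\partial H_r(\cdot,\boldsymbol\theta)}{\partial\theta_p}\Big\}.$$ If $H_r(\cdot,\widehat{\boldsymbol\theta})$ is a local optimizer of the projected problem $\min_{H_r\in\mathcal{S}}\|P(\boldsymbol\mu)[H-H_r]\|_{\mathcal{H}_2}^2$ and $\operatorname{Range}P(\boldsymbol\mu)\supseteq\mathcal{T}(\widehat{\boldsymbol\theta})$, then $H_r(\cdot,\widehat{\boldsymbol\theta})$ is also a local optimizer of the original problem $\min_{H_r\in\mathcal{S}}\|H-H_r\|_{\mathcal{H}_2}^2$.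
   Context: $\mathcal{H}_2$ denotes the Hilbert space of functions analytic in the right half-plane with inner product $\langle F,G\rangle_{\mathcal{H}_2}=\frac{1}{2\pi}\int_{-\infty}^{\infty}\overline{F(\mathrm{i}\omega)}G(\mathrm{i}\omega)\,d\omega$ and norm $\|F\|_{\mathcal{H}_2}^2=\langle F,F\rangle_{\mathcal{H}_2}$. $\mathbb{C}_+=\{\mu\in\mathbb{C}:\operatorname{Re}\mu>0\}$. For $\mu\in\mathbb{C}_+$, $v[\mu]\in\mathcal{H}_2$ is the reproducing kernel $v[\mu](z)=(z+\overline{\mu})^{-1}$, satisfying $\langle v[\mu],F\rangle_{\mathcal{H}_2}=F(\mu)$. Since $\mathcal{S}$ is nonconvex, ''local optimizer'' is understood in the sense of the first order optimality conditions: $H_r(\cdot,\widehat{\boldsymbol\theta})$ is a local optimizer of the projected problem if $\langle P(\boldsymbol\mu)[H-H_r(\cdot,\widehat{\boldsymbol\theta})],T\rangle_{\mathcal{H}_2}=0$ for all $T\in\mathcal{T}(\widehat{\boldsymbol\theta})$, and of the original problem if $\langle H-H_r(\cdot,\widehat{\boldsymbol\theta}),T\rangle_{\mathcal{H}_2}=0$ for all $T\in\mathcal{T}(\widehat{\boldsymbol\theta})$. *)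

From HB Require Import structures.
From mathcomp Require Import all_boot all_order all_algebra.
From mathcomp Require Import all_classical all_reals all_analysis.
From mathcomp Require Import complex.
Set Implicit Arguments. Unset Strict Implicit. Unset Printing Implicit Defensive.
Import Order.TTheory GRing.Theory Num.Theory.
Import numFieldNormedType.Exports.
Local Open Scope ring_scope.
Local Open Scope classical_set_scope.
Local Open Scope complex_scope.

Section H2Defs.
Variable R : realType.
Local Notation C := R[i].

Definition cpt (x w : R) : C := Complex x w.

Definition sqmod (z : C) : R := complex.Re z ^+ 2 + complex.Im z ^+ 2.
Definition cnorm (z : C) : R := Num.sqrt (sqmod z).

Definition rhp (z : C) : Prop := 0 < complex.Re z.

Definition cderivable (F : C -> C) (z : C) : Prop :=
  exists l : C, forall eps : R, 0 < eps -> exists2 del : R, 0 < del &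
    forall h : C, h != 0 -> cnorm h < del ->
      cnorm ((F (z + h) - F z) / h - l) < eps.

Definition bv_limit (F : C -> C) (w : R) (b : C) : Prop :=
  forall eps : R, 0 < eps -> exists2 del : R, 0 < del &
    forall x : R, 0 < x -> x < del -> cnorm (F (cpt x w) - b) < eps.

(* boundary value F(i w) := lim_{x -> 0+} F(x + i w) (arbitrary if no limit) *)
Definition bv (F : C -> C) (w : R) : C := xget 0 [set b | bv_limit F w b].


(* The last three clauses (a.e.
   existence of the boundary limit, its measurability and square
   integrability) are classical consequences (Fatou / Paley-Wiener),
   recorded explicitly so that the boundary inner product is meaningful. *)
Definition H2 (F : C -> C) : Prop :=
  [/\ (forall z, rhp z -> cderivable F z),
      (exists M : R, forall x : R, 0 < x ->
          (\int[@lebesgue_measure R]_(w in setT) (sqmod (F (cpt x w)))%:E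
            <= M%:E)%E),
      (exists N : set R, (@lebesgue_measure R).-negligible N /\
          forall w, ~ N w -> exists b, bv_limit F w b),
      measurable_fun setT (fun w => complex.Re (bv F w)) /\
      measurable_fun setT (fun w => complex.Im (bv F w)) &
      (@lebesgue_measure R).-integrable setT
          (fun w => (sqmod (bv F w))%:E)].

Definition h2ip (F G : C -> C) : C :=
  let f := fun w => (bv F w)^* * bv G w in
  ((2 * pi)^-1)%:C *
    Complex (Rintegral (@lebesgue_measure R) setT (fun w => complex.Re (f w)))
            (Rintegral (@lebesgue_measure R) setT (fun w => complex.Im (f w))).

Definition kern (mu : C) : C -> C := fun z => (z + mu^*)^-1.

Definition in_span (m : nat) (fs : 'I_m -> C -> C) (T : C -> C) : Prop :=
  exists c : 'I_m -> C, T = (fun z => \sum_(k < m) c k * fs k z).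

Definition h2eq (F G : C -> C) : Prop := forall z, rhp z -> F z = G z.

Definition is_orth_proj (n : nat) (mu : 'I_n -> C) (P : (C -> C) -> (C -> C))
  : Prop :=
  forall F, H2 F ->
    H2 (P F) /\ in_span (fun j => kern (mu j)) (P F) /\
    (forall j, h2ip (kern (mu j)) (fun z => F z - P F z) = 0).

Definition edir (p : nat) (k : 'I_p) : 'rV[R]_p := delta_mx 0 k.

Definition is_partial (p : nat) (Hr : 'rV[R]_p -> C -> C) (th : 'rV[R]_p)
  (k : 'I_p) (dH : C -> C) : Prop :=
  H2 dH /\
  (fun h : R =>
     let D := fun z => (Hr (th + h *: edir k) z - Hr th z) / h%:C - dH z in
     complex.Re (h2ip D D)) @ 0^' --> 0.

End H2Defs.

(* Write E = H - H_r(thhat). Every tangent direction T lies in Range P(mu) = V(mu),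
   so T agrees on C_+ with a combination sum_k c_k v[mu_k] of reproducing kernels and
   <E, T> = sum_k c_k <E, v[mu_k]>, and likewise for P(mu)E. Since E - P(mu)E is
   orthogonal to every v[mu_k], <E, v[mu_k]> = <P(mu)E, v[mu_k]>, hence
   <E, T> = <P(mu)E, T> = 0 by first-order optimality of the projected problem.

   The delicate point is the measurability of boundary values: bv F is the pointwise
   limit of the continuous functions w |-> F(1/(n+1) + i w) on the set where the limit
   exists, and that set is Borel because, by continuity in x, the Cauchy criterion for
   x -> 0+ only needs to be checked at rational x. *)

From HB Require Import structures.
From mathcomp Require Import all_boot all_order all_algebra.
From mathcomp Require Import all_classical all_reals all_analysis.
From mathcomp Require Import complex.
From mathcomp Require Import ring lra.
From mathcomp Require Import measurable_realfun.
Set Implicit Arguments. Unset Strict Implicit. Unset Printing Implicit Defensive.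
Import Order.TTheory GRing.Theory Num.Theory.
Import numFieldNormedType.Exports.
Local Open Scope ring_scope.
Local Open Scope classical_set_scope.

Section ComplexModulus.
Variable R : realType.
Local Notation C := R[i].
Local Open Scope complex_scope.

Lemma cnormE (z : C) : cnorm z = Normc.normc z.
Proof. by case: z. Qed.

Lemma cnorm_ge0 (z : C) : 0 <= cnorm z.
Proof. exact: sqrtr_ge0. Qed.

Lemma cnorm0 : cnorm (0 : C) = 0.
Proof. by rewrite cnormE Normc.normc0. Qed.

Lemma cnorm_eq0 (z : C) : cnorm z = 0 -> z = 0.
Proof. by rewrite cnormE => /Normc.eq0_normc. Qed.

Lemma cnormN (z : C) : cnorm (- z) = cnorm z.
Proof. by rewrite !cnormE normcN. Qed.

Lemma cnorm_distC (a b : C) : cnorm (a - b) = cnorm (b - a).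
Proof. by rewrite -cnormN opprB. Qed.

Lemma ler_cnormD (a b : C) : cnorm (a + b) <= cnorm a + cnorm b.
Proof. by rewrite !cnormE; exact: le_normcD. Qed.

Lemma cnormM (a b : C) : cnorm (a * b) = cnorm a * cnorm b.
Proof. by rewrite !cnormE Normc.normcM. Qed.

Lemma cnormV (z : C) : cnorm z^-1 = (cnorm z)^-1.
Proof. by rewrite !cnormE Normc.normcV. Qed.

Lemma sqmod_ge0 (z : C) : 0 <= sqmod z.
Proof. by rewrite /sqmod addr_ge0 ?sqr_ge0. Qed.

Lemma sqmodE (z : C) : sqmod z = cnorm z ^+ 2.
Proof. by rewrite /cnorm sqr_sqrtr ?sqmod_ge0. Qed.

Lemma normRe_le_cnorm (z : C) : `|complex.Re z| <= cnorm z.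
Proof.
by case: z => a b; rewrite /cnorm /sqmod -sqrtr_sqr ler_sqrt ?lerDl ?sqr_ge0 ?sqmod_ge0.
Qed.

Lemma normIm_le_cnorm (z : C) : `|complex.Im z| <= cnorm z.
Proof.
by case: z => a b; rewrite /cnorm /sqmod -sqrtr_sqr ler_sqrt ?lerDr ?sqr_ge0 ?sqmod_ge0.
Qed.

Lemma cnorm_le_normReIm (z : C) : cnorm z <= `|complex.Re z| + `|complex.Im z|.
Proof.
case: z => a b; rewrite /cnorm /sqmod /=.
rewrite -(ger0_norm (addr_ge0 (normr_ge0 a) (normr_ge0 b))) -sqrtr_sqr ler_sqrt;
  last by rewrite exprn_ge0 // addr_ge0.
rewrite -(real_normK (num_real a)) -(real_normK (num_real b)).
have := normr_ge0 a; have := normr_ge0 b; nra.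
Qed.

Lemma distRe_lt (a b : C) (e : R) :
  cnorm (a - b) < e -> `|complex.Re a - complex.Re b| < e.
Proof. by apply: le_lt_trans; rewrite -raddfB; exact: normRe_le_cnorm. Qed.

Lemma distIm_lt (a b : C) (e : R) :
  cnorm (a - b) < e -> `|complex.Im a - complex.Im b| < e.
Proof. by apply: le_lt_trans; rewrite -raddfB; exact: normIm_le_cnorm. Qed.

Lemma cnormV_le (z : C) (a : R) : 0 < a -> a <= complex.Re z -> cnorm z^-1 <= a^-1.
Proof.
move=> a0 az; have aN : a <= cnorm z := le_trans az (le_trans (ler_norm _) (normRe_le_cnorm z)).
by rewrite cnormV lef_pV2 ?posrE // (lt_le_trans a0).
Qed.

End ComplexModulus.

Section Continuity.
Variable R : realType.
Local Notation C := R[i].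
Local Open Scope complex_scope.

Definition ccontinuous_at (F : C -> C) (z : C) := forall e : R, 0 < e ->
  exists2 d : R, 0 < d & forall h, cnorm h < d -> cnorm (F (z + h) - F z) < e.

Definition rhp_continuous (F : C -> C) := forall z, rhp z -> ccontinuous_at F z.

Definition ccontinuous_line (f : R -> C) := forall (t0 e : R), 0 < e ->
  exists2 d : R, 0 < d & forall t, `|t - t0| < d -> cnorm (f t - f t0) < e.

Lemma cderivable_continuous_at (F : C -> C) z : cderivable F z -> ccontinuous_at F z.
Proof.
move=> [l Hl] e e0; have [d1 d10 Hd1] := Hl 1 ltr01.
set K := cnorm l + 1; have K0 : 0 < K by rewrite ltr_wpDl // cnorm_ge0.
exists (Num.min d1 (e / K)); first by rewrite lt_min d10 divr_gt0.
move=> h; rewrite lt_min => /andP[hd1 hdK].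
have [->|h0] := eqVneq h 0; first by rewrite addr0 subrr cnorm0.
have -> : F (z + h) - F z = h * ((F (z + h) - F z) / h) by rewrite mulrCA divff ?mulr1.
have quotient_le : cnorm ((F (z + h) - F z) / h) <= K.
  have := ler_cnormD ((F (z + h) - F z) / h - l) l; rewrite subrK => /le_trans; apply.
  by rewrite /K addrC lerD2l ltW // Hd1.
rewrite cnormM (le_lt_trans (ler_wpM2l (cnorm_ge0 h) quotient_le)) //.
by rewrite -ltr_pdivlMr.
Qed.

Lemma H2_rhp_continuous (F : C -> C) : H2 F -> rhp_continuous F.
Proof. by case=> F_der _ _ _ _ z /F_der /cderivable_continuous_at. Qed.

Lemma continuous_of_ccontinuous_line (f : R -> C) (g : C -> R) :
  (forall a b e, cnorm (a - b) < e -> `|g a - g b| < e) ->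
  ccontinuous_line f -> continuous (g \o f).
Proof.
move=> g_lip f_cont t0; apply/cvgrPdist_lt => e e0.
have [d d0 Hd] := f_cont t0 e e0; apply/nbhs_normP; exists d => //= t t0t.
by rewrite distrC; apply/g_lip/Hd; rewrite distrC.
Qed.

Lemma continuous_Re_line (f : R -> C) :
  ccontinuous_line f -> continuous (fun t => complex.Re (f t)).
Proof. exact: continuous_of_ccontinuous_line (@distRe_lt R). Qed.

Lemma continuous_Im_line (f : R -> C) :
  ccontinuous_line f -> continuous (fun t => complex.Im (f t)).
Proof. exact: continuous_of_ccontinuous_line (@distIm_lt R). Qed.

Lemma ccontinuous_horizontal (F : C -> C) (x : R) :
  rhp_continuous F -> 0 < x -> ccontinuous_line (fun w => F (cpt x w)).
Proof.
move=> F_cont x0 w0 e e0; have [d d0 Hd] := F_cont (cpt x w0) x0 e e0.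
exists d => // w hw; have -> : cpt x w = cpt x w0 + cpt 0 (w - w0) :> C.
  by apply/eqP; rewrite eq_complex /= addr0 addrC subrK !eqxx.
by apply: Hd; rewrite /cnorm /sqmod /= expr0n add0r sqrtr_sqr.
Qed.

Lemma continuous_horizontal (F : C -> C) (g : C -> R) :
  (forall a b e, cnorm (a - b) < e -> `|g a - g b| < e) -> rhp_continuous F ->
  forall x, 0 < x -> continuous (fun w => g (F (cpt x w))).
Proof.
move=> g_lip F_cont x x0.
exact: continuous_of_ccontinuous_line g_lip (ccontinuous_horizontal F_cont x0).
Qed.

Lemma continuous_vertical (F : C -> C) (g : C -> R) :
  (forall a b e, cnorm (a - b) < e -> `|g a - g b| < e) -> rhp_continuous F ->
  forall w x0 e, 0 < x0 -> 0 < e -> exists2 d, 0 < d &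
    forall x, 0 < x -> `|x - x0| < d -> `|g (F (cpt x w)) - g (F (cpt x0 w))| < e.
Proof.
move=> g_lip F_cont w x0 e x0p e0; have [d d0 Hd] := F_cont (cpt x0 w) x0p e e0.
exists d => // x _ hx; apply: g_lip; have -> : cpt x w = cpt x0 w + cpt (x - x0) 0 :> C.
  by apply/eqP; rewrite eq_complex /= addr0 addrC subrK !eqxx.
by apply: Hd; rewrite /cnorm /sqmod /= expr0n addr0 sqrtr_sqr.
Qed.

End Continuity.

Section BoundaryValues.
Variable R : realType.
Local Notation C := R[i].
Local Open Scope complex_scope.

Lemma bv_limit_uniq (F : C -> C) w a b : bv_limit F w a -> bv_limit F w b -> a = b.
Proof.
move=> Ha Hb; apply/eqP; rewrite -subr_eq0; apply/eqP/cnorm_eq0/le_anti.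
rewrite cnorm_ge0 andbT.
apply/ler_addgt0Pr => e e0; rewrite add0r.
have e2 : 0 < e / 2 by rewrite divr_gt0.
have [d1 d10 H1] := Ha _ e2; have [d2 d20 H2] := Hb _ e2.
have m0 : 0 < Num.min d1 d2 by rewrite lt_min d10.
have m1 : Num.min d1 d2 <= d1 by rewrite ge_min lexx.
have m2 : Num.min d1 d2 <= d2 by rewrite ge_min lexx orbT.
set x := Num.min d1 d2 / 2.
have [x0 xd1 xd2] : [/\ 0 < x, x < d1 & x < d2] by rewrite /x; split; lra.
have := H1 x x0 xd1; have := H2 x x0 xd2.
have := ler_cnormD (a - F (cpt x w)) (F (cpt x w) - b).
rewrite [cnorm (a - _)]cnorm_distC addrA subrK => ? ? ?; lra.
Qed.

Lemma bvE (F : C -> C) w b : bv_limit F w b -> bv F w = b.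
Proof. by move=> Hb; apply: xget_unique => // y /bv_limit_uniq; apply. Qed.

Lemma bv_default (F : C -> C) w : (forall b, ~ bv_limit F w b) -> bv F w = 0.
Proof. exact: xgetPN. Qed.

Lemma bv_ext (F G : C -> C) : h2eq F G -> bv F = bv G.
Proof.
move=> FG; apply/funext => w; rewrite /bv; congr (xget 0 _).
apply/funext => b; apply/propext.
by split=> Hb e /Hb[d d0 Hd]; exists d => // x x0 /(Hd _ x0); rewrite FG.
Qed.

Lemma bv_limitD (F G : C -> C) w a b : bv_limit F w a -> bv_limit G w b ->
  bv_limit (fun z => F z + G z) w (a + b).
Proof.
move=> Ha Hb e e0; have e2 : 0 < e / 2 by rewrite divr_gt0.
have [d1 d10 H1] := Ha _ e2; have [d2 d20 H2] := Hb _ e2.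
exists (Num.min d1 d2); first by rewrite lt_min d10 d20.
move=> x x0; rewrite lt_min => /andP[x1 x2].
have := ler_cnormD (F (cpt x w) - a) (G (cpt x w) - b).
rewrite addrACA -opprD => /le_lt_trans; apply.
by rewrite (splitr e) ltrD ?H1 ?H2.
Qed.

Lemma bv_limitZ (F : C -> C) w a c : bv_limit F w a ->
  bv_limit (fun z => c * F z) w (c * a).
Proof.
move=> Ha e e0; have K0 : 0 < cnorm c + 1 by rewrite ltr_wpDl // cnorm_ge0.
have [d d0 Hd] := Ha (e / (cnorm c + 1)) (divr_gt0 e0 K0).
exists d => // x x0 xd; rewrite -mulrBr cnormM.
apply: (le_lt_trans (y := (cnorm c + 1) * cnorm (F (cpt x w) - a))).
  by rewrite ler_wpM2r ?cnorm_ge0 ?lerDl.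
by rewrite mulrC -ltr_pdivlMr // Hd.
Qed.

Lemma bv_limitB (F G : C -> C) w a b : bv_limit F w a -> bv_limit G w b ->
  bv_limit (fun z => F z - G z) w (a - b).
Proof.
move=> Ha Hb; have := bv_limitD Ha (bv_limitZ (-1) Hb).
by rewrite mulN1r; under eq_fun do rewrite mulN1r.
Qed.

Lemma bv_limit_sum m (c : 'I_m -> C) (Fs : 'I_m -> C -> C) (bs : 'I_m -> C) w :
  (forall k, bv_limit (Fs k) w (bs k)) ->
  bv_limit (fun z => \sum_(k < m) c k * Fs k z) w (\sum_(k < m) c k * bs k).
Proof.
elim: m c Fs bs => [|m IH] c Fs bs H.
  by move=> e e0; exists 1 => // x _ _; rewrite !big_ord0 subrr cnorm0.
under eq_fun do rewrite big_ord_recr /=.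
rewrite big_ord_recr /=.
exact: bv_limitD (IH _ _ _ (fun k => H _)) (bv_limitZ _ (H ord_max)).
Qed.

End BoundaryValues.

Section RealLine.
Variable R : realType.

Lemma natSinv_gt0 n : 0 < n.+1%:R^-1 :> R.
Proof. by rewrite invr_gt0 ltr0n. Qed.

Lemma natSinv_le m n : (m <= n)%N -> n.+1%:R^-1 <= m.+1%:R^-1 :> R.
Proof. by move=> mn; rewrite lef_pV2 ?posrE ?ltr0n // ler_nat ltnS. Qed.

Lemma natSinv_lt m n : (m < n)%N -> n.+1%:R^-1 < m.+1%:R^-1 :> R.
Proof. by move=> mn; rewrite ltf_pV2 ?posrE ?ltr0n // ltr_nat ltnS. Qed.

Lemma exists_natSinv_lt (e : R) : 0 < e -> exists k, k.+1%:R^-1 < e.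
Proof. by move=> /ltr_add_invr[k]; rewrite add0r; exists k. Qed.

Lemma ratr_approx (lo hi x d : R) : lo < x < hi -> 0 < d ->
  exists2 q : rat, lo < ratr q < hi & `|ratr q - x| < d.
Proof.
move=> /andP[lox xhi] d0.
have : Num.max lo (x - d) < Num.min hi (x + d).
  by rewrite gt_max !lt_min; apply/andP; split; apply/andP; split; lra.
move=> /rat_in_itvoo[q]; rewrite in_itv /= gt_max lt_min => /andP[/andP[? ?] /andP[? ?]].
by exists q; [apply/andP | rewrite ltr_distl; apply/andP]; split; lra.
Qed.

Lemma bigcapT_measurable_rat (F : rat -> set R) :
  (forall q, measurable (F q)) -> measurable (\bigcap_q F q).
Proof.
move=> mF; rewrite -[X in measurable X]setCK setC_bigcap.
by apply/measurableC/bigcupT_measurable_rat => q; apply/measurableC.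
Qed.

Lemma measurable_implies (P : Prop) (A : set R) :
  (P -> measurable A) -> measurable [set w | P -> A w].
Proof.
have [p /(_ p) mA|np _] := pselect P.
  by have -> : [set w | P -> A w] = A by apply/seteqP; split => w /=; [apply | move=> ? _].
by have -> : [set w | P -> A w] = setT by apply/seteqP; split => w //= _ /np.
Qed.

End RealLine.
Arguments natSinv_gt0 {R} n.
Arguments natSinv_le {R m n}.
Arguments natSinv_lt {R m n}.

Section RightLimit.
Variable R : realType.
Variable u : R -> R -> R.

Definition right_lim (w c : R) := forall e, 0 < e ->
  exists2 d, 0 < d & forall x, 0 < x -> x < d -> `|u x w - c| < e.

Definition right_cauchy_on (X : set R) (w : R) := forall k, exists m, forall x y,
  X x -> X y -> 0 < x < m.+1%:R^-1 -> 0 < y < m.+1%:R^-1 ->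
  `|u x w - u y w| <= k.+1%:R^-1.

Lemma right_lim_natSinv w c : right_lim w c -> (fun n => u n.+1%:R^-1 w) @ \oo --> c.
Proof.
move=> Hc; apply/cvgrPdist_lt => e e0.
have [d d0 Hd] := Hc e e0; have [k hk] := exists_natSinv_lt d0.
exists k => // n /= kn; rewrite distrC; apply: Hd; first exact: natSinv_gt0.
exact: le_lt_trans (natSinv_le kn) hk.
Qed.

Lemma right_lim_cauchy w c : right_lim w c -> right_cauchy_on setT w.
Proof.
move=> Hc k; have e0 : 0 < k.+1%:R^-1 / 2 :> R by rewrite divr_gt0 ?natSinv_gt0.
have [d d0 Hd] := Hc _ e0; have [m md] := exists_natSinv_lt d0.
exists m => x y _ _ /andP[x0 xm] /andP[y0 ym].
have := Hd _ x0 (lt_trans xm md); have := Hd _ y0 (lt_trans ym md).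
have := ler_normB (u x w - c) (u y w - c); rewrite opprB addrA subrK.
(* lra does not accept inverses of numerals, so the tolerance is abstracted first *)
move: (k.+1%:R^-1 : R) => K ? ? ?; lra.
Qed.

Lemma right_cauchy_lim w : right_cauchy_on setT w -> exists c, right_lim w c.
Proof.
move=> Hw; set s := fun n => u n.+1%:R^-1 w.
have s_cauchy : cauchy_ex (s @ \oo).
  move=> e e0; have [k ke] := exists_natSinv_lt e0; have [m Hm] := Hw k.
  exists (s m.+1), m.+1 => // n /= mn; apply: le_lt_trans ke; apply: Hm => //.
    by rewrite natSinv_gt0 natSinv_lt.
  by rewrite natSinv_gt0 (le_lt_trans (natSinv_le mn)) ?natSinv_lt.
have /cvg_ex[c sc] : cvg (s @ \oo) by apply/cauchy_cvgP/cauchy_exP.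
exists c => e e0; have e2 : 0 < e / 2 by rewrite divr_gt0.
have [k ke] := exists_natSinv_lt e2; have [m Hm] := Hw k.
exists m.+1%:R^-1 => [|x x0 xm]; first exact: natSinv_gt0.
have [N _ HN] := (iffLR (cvgrPdist_lt _ _) sc) _ e2.
set n := maxn N m.+1.
have cn : `|c - s n| < e / 2 by apply: HN; rewrite /= leq_maxl.
have nm : n.+1%:R^-1 < m.+1%:R^-1 :> R by apply: natSinv_lt; exact: leq_maxr.
have := Hm x n.+1%:R^-1 I I; rewrite x0 xm natSinv_gt0 nm => /(_ isT isT) xn.
have := ler_normD (u x w - s n) (s n - c); rewrite addrA subrK.
rewrite distrC /s in cn; rewrite /s.
by move: (k.+1%:R^-1 : R) xn ke => K ? ? ?; lra.
Qed.

Hypothesis u_cont : forall x, 0 < x -> continuous (u x).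

Lemma measurable_fun_right_lim (A : set R) (g : R -> R) : measurable A ->
  (forall w, A w -> right_lim w (g w)) -> (forall w, ~ A w -> g w = 0) ->
  measurable_fun setT g.
Proof.
move=> mA g_lim g0; rewrite -(setUv A); apply/measurable_funU => //.
  exact: measurableC.
split.
  apply: (measurable_fun_cvg (h := fun m w => u m.+1%:R^-1 w)); last first.
    by move=> w /g_lim /right_lim_natSinv.
  move=> m; apply: measurable_funTS; apply: continuous_measurable_fun.
  exact: u_cont (natSinv_gt0 m).
apply: (eq_measurable_fun (cst (0 : R))); last exact: measurable_cst.
by move=> w; rewrite inE => /g0 ->.
Qed.

Lemma measurable_right_cauchy_ratr : measurable [set w | right_cauchy_on (range ratr) w].
Proof.
have -> : [set w | right_cauchy_on (range ratr) w] = \bigcap_k \bigcup_m \bigcap_(q : rat)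
    \bigcap_(q' : rat) [set w | 0 < (ratr q : R) < m.+1%:R^-1 -> 0 < (ratr q' : R) < m.+1%:R^-1 ->
      `|u (ratr q) w - u (ratr q') w| <= k.+1%:R^-1].
  apply/seteqP; split => w /= Hw.
    by move=> k _; have [m Hm] := Hw k; exists m => // q _ q' _; apply: Hm.
  move=> k; have [m _ Hm] := Hw k I.
  by exists m => _ _ [q _ <-] [q' _ <-]; apply: Hm.
apply: bigcapT_measurable => k; apply: bigcupT_measurable => m.
apply: bigcapT_measurable_rat => q; apply: bigcapT_measurable_rat => q'.
apply: measurable_implies => /andP[q0 _]; apply: measurable_implies => /andP[q'0 _].
have mf : measurable_fun setT (fun w => `|u (ratr q) w - u (ratr q') w|).
  apply: measurableT_comp; first exact: normr_measurable.
  by apply: measurable_funB; apply: continuous_measurable_fun; apply: u_cont.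
have := mf measurableT _ (measurable_itv `]-oo, k.+1%:R^-1]%O); rewrite setTI.
by congr measurable; apply/seteqP; split => w /=; rewrite in_itv.
Qed.

Hypothesis u_right_cont : forall w x0 e, 0 < x0 -> 0 < e ->
  exists2 d, 0 < d & forall x, 0 < x -> `|x - x0| < d -> `|u x w - u x0 w| < e.

Lemma right_cauchy_ratr w : right_cauchy_on (range ratr) w -> right_cauchy_on setT w.
Proof.
move=> Hw k; have [m Hm] := Hw k; exists m => x y _ _ xm ym.
apply/ler_addgt0Pr => e e0; have e2 : 0 < e / 2 by rewrite divr_gt0.
have [/andP[x0 _] /andP[y0 _]] := conj xm ym.
have [dx dx0 Hx] := u_right_cont w x0 e2; have [dy dy0 Hy] := u_right_cont w y0 e2.
have [q qm qx] := ratr_approx xm dx0; have [q' q'm q'y] := ratr_approx ym dy0.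
have qq' := Hm _ _ (ex_intro2 _ _ q I erefl) (ex_intro2 _ _ q' I erefl) qm q'm.
have [/andP[q0 _] /andP[q'0 _]] := conj qm q'm.
have hx := Hx _ q0 qx; have hy := Hy _ q'0 q'y; rewrite distrC in hx.
have := ler_normD (u x w - u (ratr q) w) (u (ratr q) w - u y w).
have := ler_normD (u (ratr q) w - u (ratr q') w) (u (ratr q') w - u y w).
rewrite !addrA !subrK.
by move: (k.+1%:R^-1 : R) qq' => K ? ? ?; lra.
Qed.

Lemma measurable_right_lim_set : measurable [set w | exists c, right_lim w c].
Proof.
have -> : [set w | exists c, right_lim w c] = [set w | right_cauchy_on (range ratr) w].
  apply/seteqP; split => w /=; last by move=> /right_cauchy_ratr /right_cauchy_lim.
  by move=> [c /right_lim_cauchy Hw] k; have [m Hm] := Hw k; exists m => x y _ _; apply: Hm.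
exact: measurable_right_cauchy_ratr.
Qed.

End RightLimit.

Section BoundaryMeasurable.
Variable R : realType.
Local Notation C := R[i].
Local Open Scope complex_scope.

Definition cmeasurable (f : R -> C) :=
  measurable_fun setT (fun w => complex.Re (f w)) /\
  measurable_fun setT (fun w => complex.Im (f w)).

Lemma cmeasurable_ccontinuous_line (f : R -> C) : ccontinuous_line f -> cmeasurable f.
Proof.
by move=> f_cont; split; apply: continuous_measurable_fun;
  [exact: continuous_Re_line | exact: continuous_Im_line].
Qed.

Lemma bv_limitP (F : C -> C) w b : bv_limit F w b <->
  right_lim (fun x w => complex.Re (F (cpt x w))) w (complex.Re b) /\
  right_lim (fun x w => complex.Im (F (cpt x w))) w (complex.Im b).
Proof.
split=> [Hb|[Hre Him] e e0].
  by split=> e /Hb[d d0 Hd]; exists d => // x x0 /(Hd x x0);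
    [exact: distRe_lt | exact: distIm_lt].
have e2 : 0 < e / 2 by rewrite divr_gt0.
have [d1 d10 H1] := Hre _ e2; have [d2 d20 H2] := Him _ e2.
exists (Num.min d1 d2); first by rewrite lt_min d10 d20.
move=> x x0; rewrite lt_min => /andP[xd1 xd2].
apply: le_lt_trans (cnorm_le_normReIm _) _; rewrite !raddfB /= (splitr e).
by rewrite ltrD ?H1 ?H2.
Qed.

Lemma measurable_bv_limit_set (F : C -> C) : rhp_continuous F ->
  measurable [set w | exists b, bv_limit F w b].
Proof.
move=> F_cont.
have -> : [set w | exists b, bv_limit F w b] =
    [set w | exists c, right_lim (fun x w => complex.Re (F (cpt x w))) w c] `&`
    [set w | exists c, right_lim (fun x w => complex.Im (F (cpt x w))) w c].
  apply/seteqP; split => w /=.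
    by move=> [b /bv_limitP[? ?]]; split; [exists (complex.Re b) | exists (complex.Im b)].
  by move=> [[c1 ?] [c2 ?]]; exists (Complex c1 c2); apply/bv_limitP; split.
apply: measurableI; apply: measurable_right_lim_set.
- exact: continuous_horizontal (@distRe_lt R) F_cont.
- exact: continuous_vertical (@distRe_lt R) F_cont.
- exact: continuous_horizontal (@distIm_lt R) F_cont.
- exact: continuous_vertical (@distIm_lt R) F_cont.
Qed.

Lemma cmeasurable_bv (F : C -> C) : rhp_continuous F -> cmeasurable (bv F).
Proof.
move=> F_cont; have mA := measurable_bv_limit_set F_cont.
have bv_lim w : (exists b, bv_limit F w b) -> bv_limit F w (bv F w).
  by move=> [b Hb]; rewrite (bvE Hb).
have bv0 w : ~ (exists b, bv_limit F w b) -> bv F w = 0.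
  by move=> nA; apply: bv_default => b Hb; apply: nA; exists b.
split.
  apply: (measurable_fun_right_lim (continuous_horizontal (@distRe_lt R) F_cont) mA) => w.
    by move=> /bv_lim /bv_limitP[].
  by move=> /bv0 ->.
apply: (measurable_fun_right_lim (continuous_horizontal (@distIm_lt R) F_cont) mA) => w.
  by move=> /bv_lim /bv_limitP[].
by move=> /bv0 ->.
Qed.

End BoundaryMeasurable.

Section ComplexIntegral.
Variable R : realType.
Local Notation C := R[i].
Local Notation mu := (@lebesgue_measure R).
Local Open Scope complex_scope.

Lemma integrable_lincomb (a b : R) (p q r : R -> R) :
  mu.-integrable setT (EFin \o p) -> mu.-integrable setT (EFin \o q) ->
  mu.-integrable setT (EFin \o r) ->
  mu.-integrable setT (EFin \o (fun w => a * p w + b * q w + r w)).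
Proof.
move=> ip iq ir; apply: (eq_integrable measurableT _ _ _ (integrableD measurableT
  (integrableD measurableT (integrableZl measurableT a ip) (integrableZl measurableT b iq)) ir)).
by move=> w _ /=; rewrite !EFinD !EFinM.
Qed.

Lemma Rintegral_lincomb (a b : R) (p q r : R -> R) :
  mu.-integrable setT (EFin \o p) -> mu.-integrable setT (EFin \o q) ->
  mu.-integrable setT (EFin \o r) ->
  Rintegral mu setT (fun w => a * p w + b * q w + r w) =
  a * Rintegral mu setT p + b * Rintegral mu setT q + Rintegral mu setT r.
Proof.
move=> ip iq ir.
have iap : mu.-integrable setT (EFin \o (fun w => a * p w)).
  by apply: (eq_integrable measurableT _ _ _ (integrableZl measurableT a ip)) => w _ /=;
    rewrite EFinM.
have ibq : mu.-integrable setT (EFin \o (fun w => b * q w)).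
  by apply: (eq_integrable measurableT _ _ _ (integrableZl measurableT b iq)) => w _ /=;
    rewrite EFinM.
have iapbq : mu.-integrable setT (EFin \o (fun w => a * p w + b * q w)).
  by apply: (eq_integrable measurableT _ _ _ (integrableD measurableT iap ibq)) => w _ /=;
    rewrite EFinD.
rewrite RintegralD // RintegralD //.
by rewrite (RintegralZl _ measurableT ip) (RintegralZl _ measurableT iq).
Qed.

Lemma Rintegral_ae_eq (p q : R -> R) (N : set R) :
  measurable_fun setT p -> measurable_fun setT q -> mu.-negligible N ->
  (forall w, ~ N w -> p w = q w) -> Rintegral mu setT p = Rintegral mu setT q.
Proof.
move=> mp mq nN pq; rewrite /Rintegral; congr fine.
apply: ae_eq_integral => //; try exact/measurable_EFinP.
apply: (negligibleS _ nN) => w /= npq; apply: contrapT => nNw; apply: npq => _.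
by rewrite pq.
Qed.

Lemma Re_lin (c a b : C) : complex.Re (c * a + b) =
  complex.Re c * complex.Re a + (- complex.Im c) * complex.Im a + complex.Re b.
Proof. by case: c => ? ?; case: a => ? ?; case: b => ? ? /=; ring. Qed.

Lemma Im_lin (c a b : C) : complex.Im (c * a + b) =
  complex.Re c * complex.Im a + complex.Im c * complex.Re a + complex.Im b.
Proof. by case: c => ? ?; case: a => ? ?; case: b => ? ? /=; ring. Qed.

Definition cintegrable (f : R -> C) :=
  mu.-integrable setT (EFin \o (fun w => complex.Re (f w))) /\
  mu.-integrable setT (EFin \o (fun w => complex.Im (f w))).

Definition cintegral (f : R -> C) : C :=
  Complex (Rintegral mu setT (fun w => complex.Re (f w)))
          (Rintegral mu setT (fun w => complex.Im (f w))).

Lemma cintegrable_lin (c : C) (f g : R -> C) : cintegrable f -> cintegrable g ->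
  cintegrable (fun w => c * f w + g w).
Proof.
move=> [fr fi] [gr gi]; split.
  by under eq_fun do rewrite Re_lin; exact: integrable_lincomb.
by under eq_fun do rewrite Im_lin; exact: integrable_lincomb.
Qed.

Lemma cintegral_lin (c : C) (f g : R -> C) : cintegrable f -> cintegrable g ->
  cintegral (fun w => c * f w + g w) = c * cintegral f + cintegral g.
Proof.
move=> [fr fi] [gr gi]; rewrite /cintegral.
under eq_Rintegral do rewrite Re_lin.
under [X in Complex _ X]eq_Rintegral do rewrite Im_lin.
rewrite !Rintegral_lincomb //.
move: (Rintegral _ _ _) (Rintegral _ _ _) (Rintegral _ _ _) (Rintegral _ _ _) => A B D E.
by case: c => a b /=; congr Complex; ring.
Qed.

Lemma cintegrable0 : cintegrable (fun _ => 0).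
Proof. by split; apply: (eq_integrable measurableT (cst 0%E)) (integrable0 _ _). Qed.

Lemma cintegral0 : cintegral (fun _ => 0) = 0.
Proof. by rewrite /cintegral !Rintegral_cst // !mul0r. Qed.

Lemma cintegrable_sum m (c : 'I_m -> C) (fs : 'I_m -> R -> C) :
  (forall k, cintegrable (fs k)) -> cintegrable (fun w => \sum_(k < m) c k * fs k w).
Proof.
elim: m c fs => [|m IH] c fs H.
  by under eq_fun do rewrite big_ord0; exact: cintegrable0.
under eq_fun do rewrite big_ord_recr /= addrC.
by apply: cintegrable_lin => //; apply: IH.
Qed.

Lemma cintegral_sum m (c : 'I_m -> C) (fs : 'I_m -> R -> C) :
  (forall k, cintegrable (fs k)) ->
  cintegral (fun w => \sum_(k < m) c k * fs k w) = \sum_(k < m) c k * cintegral (fs k).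
Proof.
elim: m c fs => [|m IH] c fs H.
  by under eq_fun do rewrite big_ord0; rewrite big_ord0 cintegral0.
under eq_fun do rewrite big_ord_recr /= addrC.
rewrite cintegral_lin; [|exact: H|exact: cintegrable_sum].
rewrite big_ord_recr addrC /=.
by rewrite (IH (fun k => c (widen_ord _ k)) (fun k => fs (widen_ord _ k))).

Qed.

Lemma cintegral_conj (f : R -> C) : cintegrable f ->
  cintegral (fun w => conjc (f w)) = conjc (cintegral f).
Proof.
move=> [_ fi]; rewrite /cintegral.
have Im_conj w : complex.Im (conjc (f w)) = -1 * complex.Im (f w) by case: (f w) => ? ? /=; ring.
have Re_conj w : complex.Re (conjc (f w)) = complex.Re (f w) by case: (f w).
under eq_Rintegral do rewrite Re_conj.
under [X in Complex _ X]eq_Rintegral do rewrite Im_conj.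
by rewrite (RintegralZl _ measurableT fi) mulN1r.
Qed.

Lemma cintegral_ae_eq (f g : R -> C) (N : set R) :
  cmeasurable f -> cmeasurable g -> mu.-negligible N ->
  (forall w, ~ N w -> f w = g w) -> cintegral f = cintegral g.
Proof.
move=> [fr fi] [gr gi] nN fg; rewrite /cintegral.
by rewrite (Rintegral_ae_eq fr gr nN) ?(Rintegral_ae_eq fi gi nN) // => w /fg ->.
Qed.

End ComplexIntegral.

Section BoundaryInnerProduct.
Variable R : realType.
Local Notation C := R[i].
Local Notation mu := (@lebesgue_measure R).
Local Open Scope complex_scope.

Definition L2 (f : R -> C) :=
  cmeasurable f /\ mu.-integrable setT (fun w => (sqmod (f w))%:E).

Lemma Re_conj_mul (a b : C) :
  complex.Re (conjc a * b) = complex.Re a * complex.Re b + complex.Im a * complex.Im b.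
Proof. by case: a => ? ?; case: b => ? ? /=; ring. Qed.

Lemma Im_conj_mul (a b : C) :
  complex.Im (conjc a * b) = complex.Re a * complex.Im b - complex.Im a * complex.Re b.
Proof. by case: a => ? ?; case: b => ? ? /=; ring. Qed.

Lemma measurable_sqmod (f : R -> C) : cmeasurable f ->
  measurable_fun setT (fun w => sqmod (f w)).
Proof. by move=> [fr fi]; apply: measurable_funD; exact: measurable_funX. Qed.

Lemma cmeasurable_lin (c : C) (f g : R -> C) : cmeasurable f -> cmeasurable g ->
  cmeasurable (fun w => c * f w + g w).
Proof.
move=> [fr fi] [gr gi]; split.
  under eq_fun do rewrite Re_lin.
  by apply: measurable_funD => //; apply: measurable_funD; exact: measurable_funM.
under eq_fun do rewrite Im_lin.
by apply: measurable_funD => //; apply: measurable_funD; exact: measurable_funM.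
Qed.

Lemma cmeasurable_conj_mul (f g : R -> C) : cmeasurable f -> cmeasurable g ->
  cmeasurable (fun w => conjc (f w) * g w).
Proof.
move=> [fr fi] [gr gi]; split.
  by under eq_fun do rewrite Re_conj_mul; apply: measurable_funD; exact: measurable_funM.
by under eq_fun do rewrite Im_conj_mul; apply: measurable_funB; exact: measurable_funM.
Qed.

Lemma L2_conj_mul_cintegrable (f g : R -> C) : L2 f -> L2 g ->
  cintegrable (fun w => conjc (f w) * g w).
Proof.
move=> [mf f2] [mg g2].
have [mr mi] := cmeasurable_conj_mul mf mg.
have dom : mu.-integrable setT (fun w => (sqmod (f w) + sqmod (g w))%:E).
  by apply: (eq_integrable measurableT _ _ _ (integrableD measurableT f2 g2)) => w _ /=;
    rewrite EFinD.
have bound (h : C -> R) : (forall a b : C, `|h (conjc a * b)| <= sqmod a + sqmod b) ->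
    measurable_fun setT (fun w => h (conjc (f w) * g w)) ->
    mu.-integrable setT (EFin \o (fun w => h (conjc (f w) * g w))).
  move=> hle mh; apply: (le_integrable measurableT _ _ dom); first exact/measurable_EFinP.
  by move=> w _ /=; rewrite lee_fin; apply: le_trans (hle _ _) (ler_norm _).
split.
  apply: (bound (@complex.Re R)) => // a b; rewrite Re_conj_mul /sqmod.
  case: a => x y; case: b => u v /=.
  have := sqr_ge0 (x - u); have := sqr_ge0 (x + u).
  have := sqr_ge0 (y - v); have := sqr_ge0 (y + v).
  by rewrite !sqrrB !sqrrD => ? ? ? ?; rewrite ler_norml; apply/andP; split; lra.
apply: (bound (@complex.Im R)) => // a b; rewrite Im_conj_mul /sqmod.
case: a => x y; case: b => u v /=.
have := sqr_ge0 (x - v); have := sqr_ge0 (x + v).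
have := sqr_ge0 (y - u); have := sqr_ge0 (y + u).
by rewrite !sqrrB !sqrrD => ? ? ? ?; rewrite ler_norml; apply/andP; split; lra.
Qed.

Lemma conjcM (a b : C) : conjc (a * b) = conjc a * conjc b.
Proof. exact: rmorphM. Qed.

Definition ipb (f g : R -> C) : C :=
  ((2 * pi)^-1)%:C * cintegral (fun w => conjc (f w) * g w).

Lemma h2ipE (F G : C -> C) : h2ip F G = ipb (bv F) (bv G).
Proof. by []. Qed.

Lemma ipb_sumr (f : R -> C) m (c : 'I_m -> C) (gs : 'I_m -> R -> C) :
  L2 f -> (forall k, L2 (gs k)) ->
  ipb f (fun w => \sum_(k < m) c k * gs k w) = \sum_(k < m) c k * ipb f (gs k).
Proof.
move=> Lf Lgs; rewrite /ipb.
have -> : (fun w => conjc (f w) * \sum_(k < m) c k * gs k w) =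
    (fun w => \sum_(k < m) c k * (conjc (f w) * gs k w)).
  by apply/funext => w; rewrite mulr_sumr; apply: eq_bigr => k _; rewrite mulrCA.
rewrite cintegral_sum => [|k]; last exact: L2_conj_mul_cintegrable.
by rewrite mulr_sumr; apply: eq_bigr => k _; rewrite mulrCA.
Qed.

Lemma ipbBr (f g1 g2 : R -> C) : L2 f -> L2 g1 -> L2 g2 ->
  ipb f (fun w => g1 w - g2 w) = ipb f g1 - ipb f g2.
Proof.
move=> Lf L1 L2; rewrite /ipb.
have -> : (fun w => conjc (f w) * (g1 w - g2 w)) =
    (fun w => -1 * (conjc (f w) * g2 w) + conjc (f w) * g1 w).
  by apply/funext => w; rewrite mulN1r mulrBr addrC.
rewrite cintegral_lin; [|exact: L2_conj_mul_cintegrable..].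
by rewrite mulN1r mulrDr mulrN addrC.
Qed.

Lemma ipbC (f g : R -> C) : L2 f -> L2 g -> ipb g f = conjc (ipb f g).
Proof.
move=> Lf Lg; rewrite /ipb conjcM; congr (_ * _).
  by apply/eqP; rewrite eq_complex /= oppr0 !eqxx.
rewrite -cintegral_conj; last exact: L2_conj_mul_cintegrable.
by congr cintegral; apply/funext => w; rewrite conjcM conjcK mulrC.
Qed.

Lemma ipb_ae_eqr (f g g' : R -> C) (N : set R) :
  cmeasurable f -> cmeasurable g -> cmeasurable g' -> mu.-negligible N ->
  (forall w, ~ N w -> g w = g' w) -> ipb f g = ipb f g'.
Proof.
move=> mf mg mg' nN gg'; rewrite /ipb; congr (_ * _).
by apply: (cintegral_ae_eq (cmeasurable_conj_mul mf mg) (cmeasurable_conj_mul mf mg') nN) => w /gg' ->.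
Qed.

End BoundaryInnerProduct.

Section HardySpace.
Variable R : realType.
Local Notation C := R[i].
Local Notation mu := (@lebesgue_measure R).
Local Open Scope complex_scope.

Lemma le_integrable_ae (f g : R -> R) (N : set R) :
  measurable_fun setT f -> mu.-integrable setT (EFin \o g) -> mu.-negligible N ->
  (forall w, ~ N w -> `|f w| <= g w) -> mu.-integrable setT (EFin \o f).
Proof.
move=> mf ig nN fg; apply/integrableP; split; first exact/measurable_EFinP.
apply: le_lt_trans (integrableP _ _ _ ig).2; apply: ae_ge0_le_integral => //.
- by apply/measurableT_comp => //; exact/measurable_EFinP.
- by apply/measurableT_comp => //; case/integrableP: ig.
apply: (negligibleS _ nN) => w /= nfg; apply: contrapT => nNw; apply: nfg => _.
by rewrite lee_fin (le_trans (fg w nNw)) ?ler_norm.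
Qed.

Lemma sqmodB_le (a b : C) : sqmod (a - b) <= 2 * sqmod a + 2 * sqmod b.
Proof.
rewrite /sqmod; case: a => x y; case: b => u v /=.
have := sqr_ge0 (x + u); have := sqr_ge0 (y + v).
by rewrite !sqrrB !sqrrD => ? ?; lra.
Qed.

Lemma rhp_continuousB (F G : C -> C) : rhp_continuous F -> rhp_continuous G ->
  rhp_continuous (fun z => F z - G z).
Proof.
move=> F_cont G_cont z z0 e e0; have e2 : 0 < e / 2 by rewrite divr_gt0.
have [d1 d10 H1] := F_cont z z0 _ e2; have [d2 d20 H2] := G_cont z z0 _ e2.
exists (Num.min d1 d2); first by rewrite lt_min d10 d20.
move=> h; rewrite lt_min => /andP[hd1 hd2].
have := ler_cnormD (F (z + h) - F z) (- (G (z + h) - G z)); rewrite cnormN.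
have -> : F (z + h) - F z + - (G (z + h) - G z) = F (z + h) - G (z + h) - (F z - G z).
  by ring.
move=> /le_lt_trans; apply; by rewrite (splitr e) ltrD ?H1 ?H2.
Qed.

Lemma cderivableB (F G : C -> C) z : cderivable F z -> cderivable G z ->
  cderivable (fun z => F z - G z) z.
Proof.
move=> [lF HF] [lG HG]; exists (lF - lG) => e e0; have e2 : 0 < e / 2 by rewrite divr_gt0.
have [d1 d10 H1] := HF _ e2; have [d2 d20 H2] := HG _ e2.
exists (Num.min d1 d2); first by rewrite lt_min d10 d20.
move=> h h0; rewrite lt_min => /andP[hd1 hd2].
have := ler_cnormD ((F (z + h) - F z) / h - lF) (- ((G (z + h) - G z) / h - lG)).
rewrite cnormN; have -> : (F (z + h) - F z) / h - lF + - ((G (z + h) - G z) / h - lG) =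
    (F (z + h) - G (z + h) - (F z - G z)) / h - (lF - lG) by ring.
move=> /le_lt_trans; apply; by rewrite (splitr e) ltrD ?H1 ?H2.
Qed.

Definition line_energy_bounded (F : C -> C) := exists M : R, forall x : R, 0 < x ->
  (\int[mu]_(w in setT) (sqmod (F (cpt x w)))%:E <= M%:E)%E.

Lemma measurable_line_energy (F : C -> C) x : rhp_continuous F -> 0 < x ->
  measurable_fun setT (fun w => (sqmod (F (cpt x w)))%:E).
Proof.
move=> F_cont x0; apply/measurable_EFinP; apply: measurable_sqmod.
exact: cmeasurable_ccontinuous_line (ccontinuous_horizontal F_cont x0).
Qed.

Lemma line_energy_boundedB (F G : C -> C) :
  rhp_continuous F -> rhp_continuous G ->
  line_energy_bounded F -> line_energy_bounded G ->
  line_energy_bounded (fun z => F z - G z).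
Proof.
move=> F_cont G_cont [MF HF] [MG HG]; exists (2 * MF + 2 * MG) => x x0.
have mF := measurable_line_energy F_cont x0; have mG := measurable_line_energy G_cont x0.
apply: (@le_trans _ _ (\int[mu]_(w in setT)
    ((2 * sqmod (F (cpt x w)) + 2 * sqmod (G (cpt x w)))%:E))%E).
  apply: ge0_le_integral => //.
  - by move=> w _; rewrite lee_fin sqmod_ge0.
  - exact: measurable_line_energy (rhp_continuousB F_cont G_cont) x0.
  - apply/measurable_EFinP; apply: measurable_funD; apply: measurable_funM => //;
      exact/measurable_EFinP.
  - by move=> w _; rewrite lee_fin sqmodB_le.
under eq_integral do rewrite EFinD !EFinM.
rewrite ge0_integralD //; last 4 first.
- by move=> w _; rewrite mule_ge0 // lee_fin sqmod_ge0.
- exact: measurable_funeM.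
- by move=> w _; rewrite mule_ge0 // lee_fin sqmod_ge0.
- exact: measurable_funeM.
rewrite ge0_integralZl ?ge0_integralZl //; try by move=> w _; rewrite lee_fin sqmod_ge0.
rewrite (EFinD (2 * MF)) (EFinM 2 MF) (EFinM 2 MG).
by apply: leeD; apply: lee_wpmul2l => //; [exact: HF | exact: HG].
Qed.

Lemma H2_L2 (F : C -> C) : H2 F -> L2 (bv F).
Proof. by case=> _ _ _ ? ?; split. Qed.

Lemma bv_limitB_ae (F G : C -> C) : H2 F -> H2 G ->
  exists2 N, mu.-negligible N &
    forall w, ~ N w -> bv_limit (fun z => F z - G z) w (bv F w - bv G w).
Proof.
case=> _ _ [N1 [nN1 LN1]] _ _ [_ _ [N2 [nN2 LN2]] _ _].
exists (N1 `|` N2) => [|w /not_orP[/LN1[b1 hb1] /LN2[b2 hb2]]]; first exact: negligibleU.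
by rewrite (bvE hb1) (bvE hb2); exact: bv_limitB.
Qed.

Lemma H2B (F G : C -> C) : H2 F -> H2 G -> H2 (fun z => F z - G z).
Proof.
move=> HF HG; have F_cont := H2_rhp_continuous HF; have G_cont := H2_rhp_continuous HG.
have FG_cont := rhp_continuousB F_cont G_cont.
have [N nN FG_lim] := bv_limitB_ae HF HG.
have mFG := cmeasurable_bv FG_cont.
case: HF HG => F_der F_energy _ _ F_L2 [G_der G_energy _ _ G_L2].
split => //.
- by move=> z z0; apply: cderivableB; [exact: F_der | exact: G_der].
- exact: line_energy_boundedB.
- by exists N; split => // w /FG_lim; exists (bv F w - bv G w).
- apply: (le_integrable_ae (measurable_sqmod mFG) _ nN) => [|w /FG_lim /bvE ->].
    by apply: (integrable_lincomb 2 2 F_L2 G_L2 (integrable0 _ _)).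
  by rewrite /= addr0 ger0_norm ?sqmod_ge0 ?sqmodB_le.
Qed.

Lemma h2ipBr (K F G : C -> C) : L2 (bv K) -> H2 F -> H2 G ->
  h2ip K (fun z => F z - G z) = h2ip K F - h2ip K G.
Proof.
move=> LK HF HG; have [N nN FG_lim] := bv_limitB_ae HF HG.
rewrite !h2ipE -(ipbBr LK (H2_L2 HF) (H2_L2 HG)).
apply: (ipb_ae_eqr LK.1 (H2_L2 (H2B HF HG)).1 _ nN) => [|w /FG_lim /bvE //].
have -> : (fun w => bv F w - bv G w) = (fun w => -1 * bv G w + bv F w).
  by apply/funext => w; rewrite mulN1r addrC.
exact: cmeasurable_lin (H2_L2 HG).1 (H2_L2 HF).1.
Qed.

End HardySpace.

Section ReproducingKernel.
Variable R : realType.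
Local Notation C := R[i].
Local Notation mu := (@lebesgue_measure R).
Local Open Scope complex_scope.

Lemma cnorm_invB_le (u v : C) (a : R) : 0 < a -> a <= complex.Re u -> a <= complex.Re v ->
  cnorm (u^-1 - v^-1) <= cnorm (v - u) / a ^+ 2.
Proof.
move=> a0 au av.
have [u0 v0] : u != 0 /\ v != 0.
  by split; apply/eqP => z0; [move: au | move: av]; rewrite z0 /=; lra.
have -> : u^-1 - v^-1 = (v - u) * (u^-1 * v^-1).
  by rewrite mulrBl mulrCA divff // mulr1 mulrA divff // mul1r.
rewrite cnormM cnormM expr2 invfM ler_wpM2l ?cnorm_ge0 //.
by apply: ler_pM; rewrite ?cnorm_ge0 ?cnormV_le.
Qed.

Lemma kern_lipschitz (m z z' : C) : rhp m -> 0 <= complex.Re z -> 0 <= complex.Re z' ->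
  cnorm (kern m z - kern m z') <= cnorm (z - z') / complex.Re m ^+ 2.
Proof.
rewrite /rhp /kern => m0 z0 z'0.
have Re_shift t : 0 <= complex.Re t -> complex.Re m <= complex.Re (t + m^*).
  by case: m m0 => a b; case: t => c d /= _ ?; rewrite lerDr.
apply: le_trans (cnorm_invB_le m0 (Re_shift _ z0) (Re_shift _ z'0)) _.
by rewrite opprD addrACA subrr addr0 cnorm_distC.
Qed.

Lemma bv_limit_kern (m : C) w : rhp m -> bv_limit (kern m) w (kern m (cpt 0 w)).
Proof.
move=> m0 e e0; exists (e * complex.Re m ^+ 2); first by rewrite mulr_gt0 ?exprn_gt0.
move=> x x0 xd; apply: le_lt_trans (kern_lipschitz m0 _ _) _ => /=; rewrite ?lexx ?ltW //.
have -> : cpt x w - cpt 0 w = cpt x 0 :> C.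
  by apply/eqP; rewrite eq_complex /= subr0 subrr !eqxx.
rewrite /cnorm /sqmod /= expr0n addr0 sqrtr_sqr gtr0_norm //.
by rewrite ltr_pdivrMr ?exprn_gt0.
Qed.

Lemma bv_kern (m : C) w : rhp m -> bv (kern m) w = kern m (cpt 0 w).
Proof. by move=> m0; apply/bvE/bv_limit_kern. Qed.

Lemma ccontinuous_kern_boundary (m : C) : rhp m -> ccontinuous_line (fun w => kern m (cpt 0 w)).
Proof.
move=> m0 w0 e e0; exists (e * complex.Re m ^+ 2); first by rewrite mulr_gt0 ?exprn_gt0.
move=> w ww0; apply: le_lt_trans (kern_lipschitz m0 _ _) _ => /=; rewrite ?lexx //.
have -> : cpt 0 w - cpt 0 w0 = cpt 0 (w - w0) :> C.
  by apply/eqP; rewrite eq_complex /= subrr !eqxx.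
rewrite /cnorm /sqmod /= expr0n add0r sqrtr_sqr.
by rewrite ltr_pdivrMr ?exprn_gt0.
Qed.

Lemma integrable_oneDsqrV : mu.-integrable setT (fun w => ((@oneDsqr R w)^-1)%:E).
Proof.
have f0 (x : R) : 0 <= (oneDsqr x)^-1 by rewrite invr_ge0 /oneDsqr addr_ge0 // sqr_ge0.
have cf : continuous (fun x : R => (oneDsqr x)^-1) by exact: continuous_oneDsqrV.
apply/integrableP; split; first by apply/measurable_EFinP; exact: continuous_measurable_fun.
under eq_integral do rewrite gee0_abs ?lee_fin //.
rewrite ge0_symfun_integralT //; last by move=> x /=; rewrite /oneDsqr sqrrN.
rewrite -set_itvcy (@ge0_continuous_FTC2y _ _ atan 0 (pi / 2)) //.
- by rewrite atan0 -EFinB -EFinM ltry.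
- by apply: continuous_subspaceT.
- exact: cvgy_atan.
- by apply: cvg_at_right_filter; exact: continuous_atan.
- by move=> x _; rewrite derive1_atan.
Qed.

Lemma sqmod_kern_boundary_le (a b w : R) : 0 < a ->
  sqmod (kern (Complex a b) (cpt 0 w)) <= (2 + (1 + 2 * b ^+ 2) / a ^+ 2) / oneDsqr w.
Proof.
move=> a0; set K := 2 + (1 + 2 * b ^+ 2) / a ^+ 2.
have a20 : 0 < a ^+ 2 by rewrite exprn_gt0.
have K2 : 0 <= K - 2.
  by rewrite /K addrAC subrr add0r divr_ge0 // ?sqr_ge0 // addr_ge0 // mulr_ge0 // sqr_ge0.
have K0 : 0 < K by lra.
rewrite /kern sqmodE cnormV exprVn -sqmodE.
have -> : sqmod (cpt 0 w + (Complex a b)^*) = a ^+ 2 + (w - b) ^+ 2.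
  by rewrite /sqmod /= add0r.
have n0 : 0 < a ^+ 2 + (w - b) ^+ 2 by rewrite ltr_pwDl ?sqr_ge0.
have d0 : 0 < oneDsqr w by rewrite /oneDsqr ltr_pwDl ?sqr_ge0.
rewrite -[K / _]invrK invfM invrK lef_pV2 ?posrE ?mulr_gt0 ?invr_gt0 // ler_pdivrMl //.
have hK : K * a ^+ 2 = 2 * a ^+ 2 + (1 + 2 * b ^+ 2) by rewrite mulrDl mulfVK ?gt_eqF.
rewrite /oneDsqr mulrDr hK.
(* w^2 <= 2 (w - b)^2 + 2 b^2, since the difference is (w - 2 b)^2. *)
have := sqr_ge0 (w - 2 * b); have := mulr_ge0 K2 (sqr_ge0 (w - b)).
rewrite !sqrrB !exprMn => ? ?; have := sqr_ge0 a; have := sqr_ge0 b; lra.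
Qed.

Lemma L2_bv_kern (m : C) : rhp m -> L2 (bv (kern m)).
Proof.
move=> m0; have -> : bv (kern m) = fun w => kern m (cpt 0 w).
  by apply/funext => w; rewrite bv_kern.
have mk := cmeasurable_ccontinuous_line (ccontinuous_kern_boundary m0).
split => //; move: m0 mk; rewrite /rhp; case: m => a b /= a0 mk.
apply: (le_integrable measurableT _ _ (integrableZl measurableT _ integrable_oneDsqrV)).
  by apply/measurable_EFinP; exact: measurable_sqmod.
move=> w _ /=; rewrite lee_fin ger0_norm ?sqmod_ge0 // (le_trans (sqmod_kern_boundary_le b w a0)) //.
exact: ler_norm.
Qed.

Lemma bv_kern_comb n (mu : 'I_n -> C) (c : 'I_n -> C) : (forall j, rhp (mu j)) ->
  bv (fun z => \sum_(k < n) c k * kern (mu k) z) =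
  (fun w => \sum_(k < n) c k * bv (kern (mu k)) w).
Proof.
move=> mu0; apply/funext => w; under eq_bigr do rewrite bv_kern //.
by apply: bvE; apply: bv_limit_sum => k; exact: bv_limit_kern.
Qed.

End ReproducingKernel.

Section OrthogonalProjection.
Variable R : realType.
Local Notation C := R[i].

Lemma h2ip_kern_comb (F T : C -> C) n (mu : 'I_n -> C) (c : 'I_n -> C) :
  (forall j, rhp (mu j)) -> H2 F -> h2eq T (fun z => \sum_(k < n) c k * kern (mu k) z) ->
  h2ip F T = \sum_(k < n) c k * h2ip F (kern (mu k)).
Proof.
move=> mu0 HF TE; rewrite h2ipE (bv_ext TE) bv_kern_comb //.
by apply: ipb_sumr (H2_L2 HF) _ => k; exact: L2_bv_kern.
Qed.

Lemma h2ip_orth_proj_kern n (mu : 'I_n -> C) (P : (C -> C) -> C -> C) (F : C -> C) j :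
  (forall j, rhp (mu j)) -> is_orth_proj mu P -> H2 F ->
  h2ip F (kern (mu j)) = h2ip (P F) (kern (mu j)).
Proof.
move=> mu0 HP HF; have [HPF [_ orth]] := HP F HF.
have LK := L2_bv_kern (mu0 j).
have := orth j; rewrite (h2ipBr LK HF HPF) !h2ipE => /eqP; rewrite subr_eq0 => /eqP KF_KPF.
by rewrite (ipbC LK (H2_L2 HF)) (ipbC LK (H2_L2 HPF)) KF_KPF.
Qed.

End OrthogonalProjection.

Theorem lemma1p1 (R : realType) (H : R[i] -> R[i]) (n : nat)
  (mu : 'I_n -> R[i]) (P : (R[i] -> R[i]) -> (R[i] -> R[i]))
  (p : nat) (D : set 'rV[R]_p) (Hr : 'rV[R]_p -> R[i] -> R[i])
  (thhat : 'rV[R]_p) (dH : 'I_p -> R[i] -> R[i]) :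
  H2 H -> (1 <= n)%N -> (forall j, rhp (mu j)) ->
  is_orth_proj mu P ->
  open D -> (forall th, D th -> H2 (Hr th)) ->
  D thhat ->
  (forall k, is_partial Hr thhat k (dH k)) ->
  (* local optimizer of the projected problem (first-order conditions) *)
  (forall T, in_span dH T ->
     h2ip (P (fun z => H z - Hr thhat z)) T = 0) ->
  (* Range P(mu) contains T(thhat) *)
  (forall T, in_span dH T -> exists2 G, H2 G & h2eq (P G) T) ->
  (* local optimizer of the original problem *)
  forall T, in_span dH T -> h2ip (fun z => H z - Hr thhat z) T = 0.
Proof.
move=> HH _ mu0 HP _ Hr_H2 D_thhat _ proj_opt range_T T T_tangent.
have HE : H2 (fun z => H z - Hr thhat z) := H2B HH (Hr_H2 _ D_thhat).
have [G HG PG_T] := range_T T T_tangent.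
have [_ [[c PG_comb] _]] := HP G HG.
have T_comb : h2eq T (fun z => \sum_(k < n) c k * kern (mu k) z).
  by move=> z z0; rewrite -PG_T // PG_comb.
rewrite -(proj_opt T T_tangent) (h2ip_kern_comb mu0 HE T_comb).
rewrite (h2ip_kern_comb mu0 (HP _ HE).1 T_comb).
by apply: eq_bigr => k _; rewrite (h2ip_orth_proj_kern _ mu0 HP HE).
Qed.
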